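(* Let $\psi\in\Psi$ satisfy $\lim_{t\to\infty}\frac{\psi(t\psi(t))}{\psi(t)}=1$. Then for every positive nonincreasing $x=x^*\in M_\psi$ and every $c>0$, $$\frac1{\log T}\int_1^T\frac{dt}{t\psi(t)}\int_0^{ct\psi(t)}x(s)ds=\frac1{\log T}\int_1^T\frac{dt}{t\psi(t)}\int_0^tx(s)ds+o(1)\quad\text{as }T\to\infty.$$
   Context: $\Psi$ is the class of concave increasing functions $\psi$ on $[0,\infty)$ with $\psi(\infty)=\infty$, $\psi(t)=O(t)$ as $t\to0$, $\psi(t)=o(t)$ as $t\to\infty$. $x^*$ denotes the nonincreasing right-continuous rearrangement of $|x|$. $M_\psi$ is the space of bounded measurable $x$ on $(0,\infty)$ with $\sup_{t>0}\frac1{\psi(t)}\int_0^tx^*(s)ds<\infty$. *)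

From Stdlib Require Import Reals.
From Coquelicot Require Import Coquelicot.
Open Scope R_scope.

Definition in_Psi (psi : R -> R) : Prop :=
  (forall a b l, 0 <= a -> 0 <= b -> 0 <= l <= 1 ->
     l * psi a + (1 - l) * psi b <= psi (l * a + (1 - l) * b)) /\
  (forall a b, 0 <= a -> a < b -> psi a < psi b) /\
  is_lim psi p_infty p_infty /\
  (exists K delta, 0 < delta /\
     forall t, 0 < t < delta -> Rabs (psi t) <= K * t) /\
  is_lim (fun t => psi t / t) p_infty 0.

(* x is a positive nonincreasing function on (0,oo) with x = x^*, i.e.
   nonincreasing and right-continuous on (0,oo) *)
Definition pos_decr_rearranged (x : R -> R) : Prop :=
  (forall s, 0 < s -> 0 < x s) /\
  (forall s u, 0 < s -> s <= u -> x u <= x s) /\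
  (forall s, 0 < s -> filterlim x (at_right s) (locally (x s))).

(* x belongs to M_psi (for x = x^* >= 0): bounded (measurability is automatic
   for monotone x) and sup_{t>0} (1/psi t) int_0^t x < oo *)
Definition in_M_psi (psi x : R -> R) : Prop :=
  (exists B, forall s, 0 < s -> Rabs (x s) <= B) /\
  (exists C, forall t, 0 < t -> RInt x 0 t <= C * psi t).

(* Write F t = int_0^t x and gap t = (F (c t psi t) - F t) / (t psi t) >= 0 for large t;
   the claim is int_1^T gap = o(ln T).  Cut [A0, oo) at the points s (k+1) = c s k psi (s k).
   For t in [s k, s (k+1)] one has c t psi t <= s (k+2), so the integral of gap over that block
   is at most l k (F (s (k+2)) - F (s k)) / psi (s k), where l k = ln (c psi (s k))
   = ln (s (k+1)) - ln (s k).  Slow variation gives psi (s (k+1)) <= (1 + eta) psi (s k), so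
   with v k = F (s k) / psi (s k) <= C the block bounds telescope: the first N blocks contribute
   at most C (l (N+1) + l N) + 3 C eta (l 0 + ... + l (N-1)).  As l k >= 1 grows by at most eta
   per block, the boundary terms are negligible against l 0 + ... + l (N-1) <= ln T. *)

From Stdlib Require Import Reals Lra Lia.
From Coquelicot Require Import Coquelicot.
Open Scope R_scope.

Fixpoint arith_points (a d : R) (m : nat) : list R :=
  match m with
  | O => (a :: a + d :: nil)%list
  | S m' => (a :: arith_points (a + d) d m')%list
  end.

Definition left_pointed (a d : R) (m : nat) : SF_seq :=
  SF_seq_f2 (fun u _ => u) (arith_points a d m).

Lemma arith_points_cons a d m : exists y l, arith_points a d m = (a :: y :: l)%list.
Proof. destruct m as [|[|m]]; do 2 eexists; reflexivity. Qed.

Lemma arith_points_head a d m : seq.head 0 (arith_points a d m) = a.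
Proof. now destruct (arith_points_cons a d m) as [y [l ->]]. Qed.

Lemma arith_points_last z a d m : seq.last z (arith_points a d m) = a + INR (S m) * d.
Proof.
  revert a z; induction m as [|m IH]; intros a z; [simpl; ring|].
  change (seq.last a (arith_points (a + d) d m) = a + INR (S (S m)) * d).
  rewrite IH, (S_INR (S m)); ring.
Qed.

Lemma arith_points_sorted a d m : 0 <= d -> sorted Rle (arith_points a d m).
Proof.
  intros Hd; revert a; induction m as [|m IH]; intros a; simpl; [split; [lra | exact I]|].
  specialize (IH (a + d)); destruct (arith_points_cons (a + d) d m) as [y [l Hl]].
  rewrite Hl in IH |- *; split; [lra | exact IH].
Qed.

Lemma left_pointed_S a d m : left_pointed a d (S m) = SF_cons (a, a) (left_pointed (a + d) d m).
Proof.
  unfold left_pointed; simpl arith_points; rewrite SF_cons_f2; [reflexivity|].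
  destruct (arith_points_cons (a + d) d m) as [y [l ->]]; simpl; lia.
Qed.

Lemma left_pointed_h a d m : SF_h (left_pointed a d m) = a.
Proof. destruct m; reflexivity. Qed.

Lemma left_pointed_lx a d m : SF_lx (left_pointed a d m) = arith_points a d m.
Proof.
  apply SF_lx_f2; destruct (arith_points_cons a d m) as [y [l ->]]; simpl; lia.
Qed.

Lemma Riemann_sum_left_pointed_telescope (f : R -> R) d m a :
  Riemann_sum (fun t => f t - f (t + d)) (left_pointed a d m)
  = d * (f a - f (a + INR (S m) * d)).
Proof.
  revert a; induction m as [|m IH]; intros a.
  - unfold left_pointed, Riemann_sum; simpl.
    rewrite plus_zero_r; unfold scal; simpl; unfold mult; simpl.
    rewrite Rmult_1_l; ring.
  - rewrite left_pointed_S, Riemann_sum_cons, left_pointed_h, IH, (S_INR (S m)).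
    replace (a + (INR (S m) + 1) * d) with (a + d + INR (S m) * d) by ring.
    unfold plus, scal; simpl; unfold mult; simpl.
    change (AbelianMonoid.plus ?u ?v) with (Rplus u v); ring.
Qed.

Lemma SF_fun_left_pointed d m a t : 0 < d -> a <= t <= a + INR (S m) * d ->
  exists p, a <= p /\ p + d <= a + INR (S m) * d /\ p <= t <= p + d /\
    forall h : R -> R, SF_fun (SF_map h (left_pointed a d m)) 0 t = h p.
Proof.
  intros Hd; revert a; induction m as [|m IH]; intros a Ht.
  - exists a; simpl in Ht |- *; repeat split; try lra; intros h.
    unfold left_pointed, SF_fun; simpl.
    destruct (Rlt_dec t a); [lra|]; destruct (Rle_dec t (a + d)); [reflexivity | lra].
  - rewrite !S_INR in Ht |- *; pose proof (pos_INR m).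
    destruct (arith_points_cons (a + d) d m) as [y [l Hl]].
    destruct (Rlt_dec t (a + d)) as [Hlt | Hge].
    + exists a; repeat split; try nra; intros h.
      rewrite left_pointed_S; unfold SF_fun, left_pointed; simpl; rewrite Hl; simpl.
      destruct (Rlt_dec t a); [lra|]; destruct (Rlt_dec t (a + d)); [reflexivity | lra].
    + destruct (IH (a + d)) as [p [H1 [H2 [H3 H4]]]]; [rewrite S_INR; lra|].
      rewrite S_INR in H2; exists p; repeat split; try lra; intros h.
      rewrite <- (H4 h), left_pointed_S; unfold SF_fun, left_pointed; simpl; rewrite Hl; simpl.
      destruct (Rlt_dec t a); [lra|]; destruct (Rlt_dec t (a + d)); [lra | reflexivity].
Qed.

Lemma StepFun_cast a b a' b' (phi : StepFun a' b') : a = a' -> b = b' ->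
  {phi' : StepFun a b | (forall t, phi' t = phi t) /\ RiemannInt_SF phi' = RiemannInt_SF phi}.
Proof. intros -> ->; exists phi; split; reflexivity. Qed.

(* Uniform partition into [m+1] cells: the oscillation of [f] summed over the
   cells telescopes to [(b - a) (f a - f b) / (m + 1)]. *)
Lemma Riemann_integrable_nonincreasing (f : R -> R) a b : a < b ->
  (forall u v, a <= u -> u <= v -> v <= b -> f v <= f u) ->
  Riemann_integrable f a b.
Proof.
  intros Hab Hf [eps Heps].
  assert (Hfab : f b <= f a) by (apply Hf; lra).
  destruct (nfloor_ex ((b - a) * (f a - f b) / eps)) as [m [_ Hm]].
  { apply Rdiv_le_0_compat; nra. }
  pose proof (pos_INR m).
  set (d := (b - a) / (INR m + 1)).
  assert (Hd : 0 < d) by (apply Rdiv_lt_0_compat; lra).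
  assert (Hb : a + INR (S m) * d = b) by (unfold d; rewrite S_INR; field; lra).
  set (P := left_pointed a d m).
  assert (Psorted : SF_sorted Rle P) by (apply SF_sorted_f2, arith_points_sorted; lra).
  assert (Phead : forall h : R -> R, a = seq.head 0 (SF_lx (SF_map h P)))
    by (intros h; unfold P; rewrite SF_map_lx, left_pointed_lx, arith_points_head; auto).
  assert (Plast : forall h : R -> R, b = seq.last 0 (SF_lx (SF_map h P)))
    by (intros h; unfold P; rewrite SF_map_lx, left_pointed_lx, arith_points_last; auto).
  set (osc := fun t => f t - f (t + d)).
  destruct (StepFun_cast a b _ _ (SF_compat_le (SF_map f P) (SF_map_sort f P Rle Psorted))
              (Phead f) (Plast f)) as [phi [Hphi _]].
  destruct (StepFun_cast a b _ _ (SF_compat_le (SF_map osc P) (SF_map_sort osc P Rle Psorted))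
              (Phead osc) (Plast osc)) as [chi [Hchi Hint]].
  exists phi, chi; split.
  - intros t Ht; rewrite Rmin_left, Rmax_right in Ht by lra.
    rewrite Hphi, Hchi; simpl.
    destruct (SF_fun_left_pointed d m a t Hd ltac:(lra)) as [p [H1 [H2 [H3 H4]]]].
    fold P in H4; rewrite !H4; unfold osc.
    assert (f t <= f p) by (apply Hf; lra).
    assert (f (p + d) <= f t) by (apply Hf; lra).
    rewrite Rabs_left1 by lra; lra.
  - rewrite Hint, <- Riemann_sum_compat; unfold osc, P.
    rewrite Riemann_sum_left_pointed_telescope, Hb.
    rewrite Rabs_right by (apply Rle_ge, Rmult_le_pos; lra); simpl.
    apply Rmult_lt_reg_r with (INR m + 1); [lra|].
    replace (d * (f a - f b) * (INR m + 1)) with ((b - a) * (f a - f b)) by (unfold d; field; lra).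
    assert ((b - a) * (f a - f b) / eps * eps = (b - a) * (f a - f b)) by (field; lra).
    nra.
Qed.

Lemma ex_RInt_nonincreasing (f : R -> R) a b : a <= b ->
  (forall u v, a <= u -> u <= v -> v <= b -> f v <= f u) ->
  ex_RInt f a b.
Proof.
  intros Hab Hf; destruct (Rle_lt_or_eq_dec _ _ Hab) as [Hlt | ->].
  - apply ex_RInt_Reals_1, Riemann_integrable_nonincreasing; auto.
  - apply ex_RInt_point.
Qed.

Section ConcaveIncreasing.

Variable psi : R -> R.
Hypothesis psi_concave : forall a b l, 0 <= a -> 0 <= b -> 0 <= l <= 1 ->
  l * psi a + (1 - l) * psi b <= psi (l * a + (1 - l) * b).
Hypothesis psi_increasing : forall a b, 0 <= a -> a < b -> psi a < psi b.

Lemma psi_le a b : 0 <= a -> a <= b -> psi a <= psi b.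
Proof.
  intros Ha Hab; destruct (Rle_lt_or_eq_dec _ _ Hab) as [Hlt | ->]; [|lra].
  now left; apply psi_increasing.
Qed.

Lemma psi_chord u v w : 0 <= u -> u <= v <= w -> u < w ->
  (w - v) * psi u + (v - u) * psi w <= (w - u) * psi v.
Proof.
  intros Hu Hv Huw.
  set (l := (w - v) / (w - u)).
  assert (Hl : 0 <= l <= 1).
  { unfold l; split; [apply Rdiv_le_0_compat; lra|].
    apply Rmult_le_reg_r with (w - u); [lra|]; unfold Rdiv.
    rewrite Rmult_assoc, Rinv_l; lra. }
  pose proof (psi_concave u w l Hu ltac:(lra) Hl) as H.
  replace (l * u + (1 - l) * w) with v in H by (unfold l; field; lra).
  apply Rmult_le_compat_l with (r := w - u) in H; [|lra].
  replace ((w - u) * (l * psi u + (1 - l) * psi w))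
    with ((w - v) * psi u + (v - u) * psi w) in H by (unfold l; field; lra).
  exact H.
Qed.

(* Both cases are the chord inequality with left end [t/2]. *)
Lemma psi_lipschitz_near t y : 0 < t -> t / 2 <= y ->
  t / 2 * Rabs (psi y - psi t) <= Rabs (y - t) * (psi t - psi (t / 2)).
Proof.
  intros Ht Hy.
  assert (psi (t / 2) < psi t) by (apply psi_increasing; lra).
  destruct (Rle_or_lt t y) as [Hty | Hyt].
  - pose proof (psi_chord (t / 2) t y ltac:(lra) ltac:(lra)) as Hc.
    destruct (Req_dec y t) as [-> | Hne]; [rewrite !Rminus_diag, Rabs_R0; lra|].
    specialize (Hc ltac:(lra)).
    assert (psi t <= psi y) by (apply psi_le; lra).
    rewrite !Rabs_right by lra; nra.
  - pose proof (psi_chord (t / 2) y t ltac:(lra) ltac:(lra) ltac:(lra)) as Hc.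
    assert (psi y <= psi t) by (apply psi_le; lra).
    rewrite !Rabs_left1 by lra; nra.
Qed.

Lemma psi_continuous t : 0 < t -> continuous psi t.
Proof.
  intros Ht; apply continuity_pt_filterlim.
  intros eps Heps.
  set (W := psi t - psi (t / 2)).
  assert (HW : 0 < W) by (unfold W; assert (psi (t / 2) < psi t) by (apply psi_increasing; lra); lra).
  exists (Rmin (t / 2) (eps * t / (2 * W))); split.
  { apply Rmin_glb_lt; [lra|]; apply Rdiv_lt_0_compat; nra. }
  intros y [_ Hy]; simpl in Hy |- *; unfold R_dist in *.
  assert (Hy1 : Rabs (y - t) < t / 2) by (pose proof (Rmin_l (t / 2) (eps * t / (2 * W))); lra).
  assert (Hy2 : Rabs (y - t) * (2 * W) < eps * t).
  { pose proof (Rmin_r (t / 2) (eps * t / (2 * W))).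
    apply Rmult_lt_reg_r with (/ (2 * W)); [apply Rinv_0_lt_compat; lra|].
    rewrite Rmult_assoc, Rinv_r, Rmult_1_r by lra; unfold Rdiv in *; lra. }
  pose proof (psi_lipschitz_near t y Ht ltac:(apply Rabs_def2 in Hy1; lra)).
  fold W in H; apply Rmult_lt_reg_l with t; lra.
Qed.

Lemma psi_pos :
  (exists K delta, 0 < delta /\ forall t, 0 < t < delta -> Rabs (psi t) <= K * t) ->
  forall t, 0 < t -> 0 < psi t.
Proof.
  intros [K [delta [Hdelta HK]]] t Ht; apply Rnot_le_lt; intros Hneg.
  set (u := Rmin t delta / 2).
  assert (Hu : 0 < u < t /\ u < delta).
  { pose proof (Rmin_l t delta); pose proof (Rmin_r t delta).
    assert (0 < Rmin t delta) by (apply Rmin_glb_lt; lra); unfold u; lra. }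
  assert (Hpu : psi u < 0) by (assert (psi u < psi t) by (apply psi_increasing; lra); lra).
  set (w := Rmin (u / 2) (- psi u / (2 * (Rabs K + 1)))).
  assert (HK1 : 0 < Rabs K + 1) by (pose proof (Rabs_pos K); lra).
  assert (Hw : 0 < w < u).
  { assert (0 < Rmin (u / 2) (- psi u / (2 * (Rabs K + 1))))
      by (apply Rmin_glb_lt; [lra | apply Rdiv_lt_0_compat; lra]).
    pose proof (Rmin_l (u / 2) (- psi u / (2 * (Rabs K + 1)))); unfold w; lra. }
  assert (Hw2 : w * (Rabs K + 1) <= - psi u / 2).
  { assert (w <= - psi u / (2 * (Rabs K + 1))) by apply Rmin_r.
    apply Rmult_le_compat_r with (r := Rabs K + 1) in H; [|lra].
    replace (- psi u / (2 * (Rabs K + 1)) * (Rabs K + 1)) with (- psi u / 2) in H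
      by (field; lra); lra. }
  assert (psi w < psi u) by (apply psi_increasing; lra).
  assert (Rabs (psi w) <= K * w) by (apply HK; lra).
  assert (K * w <= Rabs K * w) by (apply Rmult_le_compat_r; [lra | apply Rle_abs]).
  pose proof (Rabs_maj2 (psi w)); lra.
Qed.

End ConcaveIncreasing.

Section Primitive.

Variables (x : R -> R) (B : R).
Hypothesis x_pos : forall s, 0 < s -> 0 < x s.
Hypothesis x_nonincreasing : forall s u, 0 < s -> s <= u -> x u <= x s.
Hypothesis x_bounded : forall s, 0 < s -> Rabs (x s) <= B.

(* [x] need not be monotone at [0], so integrate its extension by [B] on [s <= 0]. *)
Lemma ex_RInt_x p q : 0 <= p -> p <= q -> ex_RInt x p q.
Proof.
  intros Hp Hpq.
  apply ex_RInt_ext with (fun s => if Rle_dec s 0 then B else x s).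
  { intros s Hs; rewrite Rmin_left, Rmax_right in Hs by lra.
    destruct (Rle_dec s 0); [lra | reflexivity]. }
  apply ex_RInt_nonincreasing; [exact Hpq|]; intros u v Hu Huv Hv.
  destruct (Rle_dec v 0), (Rle_dec u 0); try lra.
  - pose proof (x_bounded v ltac:(lra)); pose proof (Rle_abs (x v)); lra.
  - apply x_nonincreasing; lra.
Qed.

Definition F (t : R) : R := RInt x 0 t.

Lemma F_le p q : 0 <= p -> p <= q -> F p <= F q.
Proof.
  intros Hp Hpq; unfold F.
  rewrite <- (RInt_Chasles x 0 p q) by (apply ex_RInt_x; lra).
  assert (0 <= RInt x p q).
  { apply RInt_ge_0; [exact Hpq | apply ex_RInt_x; lra|].
    intros s Hs; left; apply x_pos; lra. }
  unfold plus; simpl; lra.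
Qed.

Lemma F_nonneg q : 0 <= q -> 0 <= F q.
Proof.
  intros Hq; replace 0 with (F 0) by (unfold F; now rewrite RInt_point).
  now apply F_le; [right|].
Qed.

Lemma F_continuous y : 0 < y -> continuous F y.
Proof.
  intros Hy; apply (continuous_RInt_1 x 0 y F).
  exists (mkposreal y Hy); intros z Hz.
  apply (RInt_correct (V := R_CompleteNormedModule)), ex_RInt_x; [lra|].
  change (Rabs (z - y) < y) in Hz; apply Rabs_def2 in Hz; lra.
Qed.

End Primitive.

Lemma ex_RInt_continuous_pos (f : R -> R) p q :
  (forall t, 0 < t -> continuous f t) -> 0 < p -> p <= q -> ex_RInt f p q.
Proof.
  intros Hf Hp Hpq; apply (ex_RInt_continuous (V := R_CompleteNormedModule)).
  rewrite Rmin_left, Rmax_right by lra; intros z Hz; apply Hf; lra.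
Qed.

Lemma RInt_scal_inv K a b : 0 < a -> a <= b -> RInt (fun t => K * / t) a b = K * (ln b - ln a).
Proof.
  intros Ha Hab; apply is_RInt_unique.
  replace (K * (ln b - ln a)) with (minus (K * ln b) (K * ln a))
    by (unfold minus, plus, opp; simpl; ring).
  apply (is_RInt_derive (fun t => K * ln t)); rewrite Rmin_left, Rmax_right by lra;
    intros t Ht.
  - apply is_derive_scal, is_derive_ln; lra.
  - apply (continuous_mult (fun _ => K) Rinv); [apply continuous_const|].
    apply continuous_Rinv; lra.
Qed.

Lemma nat_bracket (u : nat -> R) T n : u O <= T -> T < u n ->
  exists N, (N < n)%nat /\ u N <= T < u (S N).
Proof.
  intros H0; induction n as [|n IH]; intros Hn; [lra|].
  destruct (Rlt_or_le T (u n)) as [Hlt | Hle].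
  - destruct (IH Hlt) as [N [HN HT]]; exists N; split; [lia | exact HT].
  - exists n; split; [lia | lra].
Qed.

(* [3 <= c psi t] makes the stretching sequence grow geometrically and [ln (c psi t) >= 1]. *)
Definition slow_beyond (psi : R -> R) (c eta A0 : R) : Prop :=
  forall t, A0 <= t -> 3 <= c * psi t /\ psi (c * t * psi t) <= (1 + eta) * psi t.

Lemma slow_beyond_eventually (psi : R -> R) c eta :
  (forall a b, 0 <= a -> a < b -> psi a < psi b) ->
  (forall t, 0 < t -> 0 < psi t) ->
  is_lim psi p_infty p_infty ->
  is_lim (fun t => psi (t * psi t) / psi t) p_infty 1 ->
  0 < c -> 0 < eta <= 1 ->
  exists A0, 1 <= A0 /\ slow_beyond psi c eta A0.
Proof.
  (* With d = max c 1 <= psi t: psi (c t psi t) <= psi (d t psi (d t))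
     <= (1 + eta/3) psi (d t) <= (1 + eta/3) psi (t psi t) <= (1 + eta/3)^2 psi t. *)
  intros Hinc Hpos Hlim Hslow Hc Heta.
  set (d := Rmax c 1).
  assert (Hd : c <= d /\ 1 <= d) by (split; [apply Rmax_l | apply Rmax_r]).
  apply is_lim_spec in Hlim, Hslow.
  destruct (Hlim (Rmax (3 / c) d)) as [M2 HM2].
  destruct (Hslow (mkposreal (eta / 3) ltac:(lra))) as [M1 HM1]; simpl in HM1.
  assert (Hstep : forall y, M1 < y -> 0 < y -> psi (y * psi y) <= (1 + eta / 3) * psi y).
  { intros y Hy Hy0; pose proof (Hpos y Hy0).
    destruct (Rabs_def2 _ _ (HM1 y Hy)) as [Hr _].
    apply Rmult_le_reg_r with (/ psi y); [apply Rinv_0_lt_compat; lra|].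
    rewrite Rmult_assoc, Rinv_r, Rmult_1_r by lra; unfold Rdiv in Hr; lra. }
  set (A0 := Rmax 1 (Rmax (M1 + 1) (M2 + 1))).
  assert (HA0 : 1 <= A0 /\ M1 + 1 <= A0 /\ M2 + 1 <= A0).
  { unfold A0; pose proof (Rmax_l 1 (Rmax (M1 + 1) (M2 + 1))).
    pose proof (Rmax_r 1 (Rmax (M1 + 1) (M2 + 1))).
    pose proof (Rmax_l (M1 + 1) (M2 + 1)); pose proof (Rmax_r (M1 + 1) (M2 + 1)); lra. }
  exists A0; split; [lra|]; intros t Ht.
  assert (Hbig : 3 / c < psi t /\ d < psi t).
  { pose proof (HM2 t ltac:(lra)); pose proof (Rmax_l (3 / c) d); pose proof (Rmax_r (3 / c) d); lra. }
  pose proof (Hpos t ltac:(lra)).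
  split.
  - destruct Hbig as [H3 _]; apply Rmult_lt_compat_l with (r := c) in H3; [|lra].
    replace (c * (3 / c)) with 3 in H3 by (field; lra); lra.
  - assert (0 < c * t /\ t <= d * t) by (split; nra).
    assert (Hdt : psi t <= psi (d * t)) by (apply (psi_le psi Hinc); lra).
    assert (psi (c * t * psi t) <= psi (d * t * psi (d * t)))
      by (apply (psi_le psi Hinc); [nra | apply Rmult_le_compat; nra]).
    assert (psi (d * t * psi (d * t)) <= (1 + eta / 3) * psi (d * t)) by (apply Hstep; nra).
    assert (psi (d * t) <= psi (t * psi t)) by (apply (psi_le psi Hinc); nra).
    assert (psi (t * psi t) <= (1 + eta / 3) * psi t) by (apply Hstep; lra).
    nra.
Qed.

(* The integral over the fixed interval [1, A0] is negligible against [ln T]. *)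
Lemma is_lim_RInt_div_ln (g : R -> R) :
  (forall p q, 1 <= p -> p <= q -> ex_RInt g p q) ->
  (forall e, 0 < e -> exists A0 M, 1 <= A0 /\
     forall T, M <= T -> A0 <= T /\ Rabs (RInt g A0 T) <= e * ln T) ->
  is_lim (fun T => / ln T * RInt g 1 T) p_infty 0.
Proof.
  intros Hg Hsmall; apply is_lim_spec; intros [eps Heps]; simpl.
  destruct (Hsmall (eps / 2) ltac:(lra)) as [A0 [M [HA0 HM]]].
  set (K0 := RInt g 1 A0).
  exists (Rmax M (exp (2 * Rabs K0 / eps))); intros T HT.
  pose proof (Rmax_l M (exp (2 * Rabs K0 / eps))); pose proof (Rmax_r M (exp (2 * Rabs K0 / eps))).
  destruct (HM T ltac:(lra)) as [HAT HI].
  assert (HlnT : 2 * Rabs K0 / eps < ln T).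
  { rewrite <- (ln_exp (2 * Rabs K0 / eps)); apply ln_increasing; [apply exp_pos | lra]. }
  assert (HK0 : Rabs K0 < eps / 2 * ln T).
  { apply Rmult_lt_compat_r with (r := eps / 2) in HlnT; [|lra].
    replace (2 * Rabs K0 / eps * (eps / 2)) with (Rabs K0) in HlnT by (field; lra); lra. }
  assert (Hln : 0 < ln T) by (pose proof (Rabs_pos K0); nra).
  rewrite <- (RInt_Chasles g 1 A0 T) by (apply Hg; lra); change (plus ?u ?v) with (u + v).
  rewrite Rminus_0_r, Rabs_mult, Rabs_inv, Rabs_right by lra; fold K0.
  apply Rmult_lt_reg_l with (ln T); [exact Hln|].
  rewrite <- Rmult_assoc, Rinv_r, Rmult_1_l by lra.
  pose proof (Rabs_triang K0 (RInt g A0 T)); lra.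
Qed.

Section Gap.

Variables (psi x : R -> R) (c B C : R).
Hypothesis psi_concave : forall a b l, 0 <= a -> 0 <= b -> 0 <= l <= 1 ->
  l * psi a + (1 - l) * psi b <= psi (l * a + (1 - l) * b).
Hypothesis psi_increasing : forall a b, 0 <= a -> a < b -> psi a < psi b.
Hypothesis psi_positive : forall t, 0 < t -> 0 < psi t.
Hypothesis x_pos : forall s, 0 < s -> 0 < x s.
Hypothesis x_nonincreasing : forall s u, 0 < s -> s <= u -> x u <= x s.
Hypothesis x_bounded : forall s, 0 < s -> Rabs (x s) <= B.
Hypothesis c_pos : 0 < c.
Hypothesis C_ge1 : 1 <= C.
Hypothesis F_le_C_psi : forall t, 0 < t -> F x t <= C * psi t.

Definition weight (t : R) : R := / (t * psi t).

Definition gap (t : R) : R := weight t * F x (c * t * psi t) - weight t * F x t.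

Lemma weighted_F_continuous (h : R -> R) t : 0 < t -> continuous h t -> 0 < h t ->
  continuous (fun t => weight t * F x (h t)) t.
Proof.
  intros Ht Hh Hpos; pose proof (psi_positive t Ht).
  apply (continuous_mult weight (fun t => F x (h t))).
  - apply continuous_Rinv_comp; [|nra].
    apply (continuous_mult id psi); [apply continuous_id | now apply psi_continuous].
  - apply (continuous_comp h (F x)); [exact Hh|].
    now apply (F_continuous x B).
Qed.

Lemma stretch_continuous t : 0 < t -> continuous (fun t => c * t * psi t) t.
Proof.
  intros Ht; apply (continuous_mult (fun t => c * t) psi); [|now apply psi_continuous].
  apply (continuous_scal_r c id), continuous_id.
Qed.

Lemma long_continuous t : 0 < t -> continuous (fun t => weight t * F x (c * t * psi t)) t.
Proof.
  intros Ht; pose proof (psi_positive t Ht).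
  apply weighted_F_continuous; [exact Ht | now apply stretch_continuous|].
  apply Rmult_lt_0_compat; [apply Rmult_lt_0_compat|]; assumption.
Qed.

Lemma short_continuous t : 0 < t -> continuous (fun t => weight t * F x t) t.
Proof. intros Ht; apply (weighted_F_continuous id); [exact Ht | apply continuous_id | exact Ht]. Qed.

Lemma ex_RInt_gap p q : 0 < p -> p <= q -> ex_RInt gap p q.
Proof.
  apply ex_RInt_continuous_pos; intros t Ht.
  apply (continuous_minus (fun t => weight t * F x (c * t * psi t)) (fun t => weight t * F x t)).
  - now apply long_continuous.
  - now apply short_continuous.
Qed.

Lemma RInt_gap p q : 0 < p -> p <= q ->
  RInt gap p q = RInt (fun t => weight t * F x (c * t * psi t)) p q
               - RInt (fun t => weight t * F x t) p q.
Proof.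
  intros Hp Hpq; apply (RInt_minus (V := R_CompleteNormedModule)).
  - apply ex_RInt_continuous_pos; [apply long_continuous | exact Hp | exact Hpq].
  - apply ex_RInt_continuous_pos; [apply short_continuous | exact Hp | exact Hpq].
Qed.

Section Blocks.

Variables (A0 eta : R).
Hypothesis A0_ge1 : 1 <= A0.
Hypothesis eta_range : 0 < eta <= 1.
Hypothesis A0_slow : slow_beyond psi c eta A0.

Fixpoint s (k : nat) : R := match k with O => A0 | S k => c * s k * psi (s k) end.

Lemma s_ge k : A0 <= s k /\ 3 * s k <= s (S k).
Proof.
  assert (Hstep : forall j, A0 <= s j -> 3 * s j <= s (S j)).
  { intros j Hj; destruct (A0_slow (s j) Hj); simpl; nra. }
  induction k as [|k [IH1 IH2]].
  - split; [simpl; lra | apply Hstep; simpl; lra].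
  - assert (A0 <= s (S k)) by lra; split; [exact H | now apply Hstep].
Qed.

Lemma s_pos k : 0 < s k.
Proof. destruct (s_ge k); lra. Qed.

Lemma s_le k j : (k <= j)%nat -> s k <= s j.
Proof. induction 1 as [|j _ IH]; [lra|]; destruct (s_ge j); pose proof (s_pos j); lra. Qed.

Lemma INR_le_s k : INR k <= s k.
Proof. induction k as [|k IH]; [simpl; lra|]; rewrite S_INR; destruct (s_ge k); lra. Qed.

Lemma psi_s_step k : psi (s k) <= psi (s (S k)) <= (1 + eta) * psi (s k).
Proof.
  destruct (s_ge k); pose proof (s_pos k); split.
  - apply (psi_le psi psi_increasing); lra.
  - apply A0_slow; lra.
Qed.

Definition l (k : nat) : R := ln (c * psi (s k)).

Definition v (k : nat) : R := F x (s k) / psi (s k).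

Definition w (k : nat) : R := l k * v k.

Fixpoint L (n : nat) : R := match n with O => 0 | S n => L n + l n end.

Lemma l_ge1 k : 1 <= l k.
Proof.
  destruct (A0_slow (s k)) as [H _]; [apply s_ge|].
  rewrite <- (ln_exp 1); apply ln_le; [apply exp_pos|]; pose proof exp_le_3; lra.
Qed.

Lemma l_step k : l k <= l (S k) <= l k + eta.
Proof.
  unfold l; destruct (psi_s_step k); pose proof (psi_positive (s k) (s_pos k)).
  pose proof (exp_ineq1_le eta); split.
  - apply ln_le; nra.
  - rewrite <- (ln_exp eta), <- ln_mult by (try apply exp_pos; nra).
    apply ln_le; [nra|].
    assert (c * psi (s (S k)) <= c * ((1 + eta) * psi (s k))) by (apply Rmult_le_compat_l; lra).
    assert ((1 + eta) * (c * psi (s k)) <= exp eta * (c * psi (s k)))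
      by (apply Rmult_le_compat_r; nra).
    lra.
Qed.

Lemma ln_s k : ln (s k) = ln A0 + L k.
Proof.
  induction k as [|k IH]; simpl; [ring|].
  pose proof (s_pos k); pose proof (psi_positive (s k) H).
  replace (c * s k * psi (s k)) with (s k * (c * psi (s k))) by ring.
  rewrite ln_mult, IH by nra; unfold l; ring.
Qed.

Lemma v_bounds k : 0 <= v k <= C.
Proof.
  pose proof (s_pos k); pose proof (psi_positive (s k) H).
  pose proof (F_nonneg x B x_pos x_nonincreasing x_bounded (s k) ltac:(lra)).
  pose proof (F_le_C_psi (s k) H).
  unfold v; split; [apply Rdiv_le_0_compat; lra|].
  apply Rmult_le_reg_r with (psi (s k)); [lra|].
  unfold Rdiv; rewrite Rmult_assoc, Rinv_l; lra.
Qed.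

Lemma w_bounds k : 0 <= w k <= C * l k.
Proof. pose proof (v_bounds k); pose proof (l_ge1 k); unfold w; split; nra. Qed.

Lemma gap_nonneg t : A0 <= t -> 0 <= gap t.
Proof.
  intros Ht; pose proof (psi_positive t ltac:(lra)); destruct (A0_slow t Ht).
  pose proof (F_le x B x_pos x_nonincreasing x_bounded t (c * t * psi t) ltac:(lra) ltac:(nra)).
  assert (0 < weight t) by (apply Rinv_0_lt_compat; nra).
  unfold gap; nra.
Qed.

Lemma gap_le_on_block k t : s k <= t <= s (S k) ->
  gap t <= (F x (s (S (S k))) - F x (s k)) / psi (s k) * / t.
Proof.
  intros Ht; destruct (s_ge k); pose proof (s_pos k).
  pose proof (psi_positive t ltac:(lra)); pose proof (psi_positive (s k) ltac:(lra)).
  destruct (A0_slow t ltac:(lra)).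
  assert (Hpsi : psi (s k) <= psi t) by (apply (psi_le psi psi_increasing); lra).
  assert (Hstretch : c * t * psi t <= s (S (S k))).
  { assert (psi t <= psi (s (S k))) by (apply (psi_le psi psi_increasing); lra).
    change (s (S (S k))) with (c * s (S k) * psi (s (S k))).
    apply Rmult_le_compat; nra. }
  assert (F x (c * t * psi t) <= F x (s (S (S k))))
    by (apply (F_le x B x_pos x_nonincreasing x_bounded); nra).
  assert (F x (s k) <= F x t) by (apply (F_le x B x_pos x_nonincreasing x_bounded); lra).
  assert (F x t <= F x (c * t * psi t)) by (apply (F_le x B x_pos x_nonincreasing x_bounded); nra).
  unfold gap, weight.
  replace (/ (t * psi t) * F x (c * t * psi t) - / (t * psi t) * F x t)
    with ((F x (c * t * psi t) - F x t) * / (t * psi t)) by ring.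
  replace ((F x (s (S (S k))) - F x (s k)) / psi (s k) * / t)
    with ((F x (s (S (S k))) - F x (s k)) * / (t * psi (s k))) by (field; lra).
  apply Rmult_le_compat; [lra | left; apply Rinv_0_lt_compat; nra | lra |].
  apply Rinv_le_contravar; [nra | apply Rmult_le_compat_l; lra].
Qed.

(* Integrating [1 / t] over a block gives [ln (s (k+1)) - ln (s k) = l k]; since
   [psi (s (k+2)) <= (1 + 3 eta) psi (s k)], the bound telescopes in [w]. *)
Lemma RInt_gap_block k :
  RInt gap (s k) (s (S k)) <= w (S (S k)) - w k + 3 * C * eta * l k.
Proof.
  destruct (s_ge k); pose proof (s_pos k).
  set (P0 := psi (s k)); set (P2 := psi (s (S (S k)))).
  assert (HP0 : 0 < P0) by (apply psi_positive; lra).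
  assert (HP2 : P2 <= (1 + 3 * eta) * P0).
  { destruct (psi_s_step k), (psi_s_step (S k)); fold P0 P2 in H2, H3, H4, H5. nra. }
  eapply Rle_trans.
  { apply RInt_le with (g := fun t => (F x (s (S (S k))) - F x (s k)) / P0 * / t); [lra | | |].
    - apply ex_RInt_gap; lra.
    - apply ex_RInt_continuous_pos; [|lra | lra]; intros t Ht.
      apply (continuous_mult (fun _ => _) Rinv); [apply continuous_const|].
      apply continuous_Rinv; lra.
    - intros t Ht; apply gap_le_on_block; lra. }
  rewrite RInt_scal_inv, ln_s, ln_s by lra.
  replace (ln A0 + L (S k) - (ln A0 + L k)) with (l k) by (simpl; ring).
  replace ((F x (s (S (S k))) - F x (s k)) / P0) with (v (S (S k)) * (P2 / P0) - v k)
    by (unfold v, P0, P2; field; split; apply Rgt_not_eq, psi_positive, s_pos).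
  pose proof (v_bounds k); pose proof (v_bounds (S (S k))).
  pose proof (l_ge1 k); destruct (l_step k), (l_step (S k)).
  assert (Hq : P2 / P0 <= 1 + 3 * eta).
  { apply Rmult_le_reg_r with P0; [exact HP0|].
    unfold Rdiv; rewrite Rmult_assoc, Rinv_l; lra. }
  assert (v (S (S k)) * (P2 / P0) <= v (S (S k)) + 3 * eta * C).
  { assert (v (S (S k)) * (P2 / P0) <= v (S (S k)) * (1 + 3 * eta))
      by (apply Rmult_le_compat_l; lra).
    nra. }
  assert (l k * v (S (S k)) <= l (S (S k)) * v (S (S k))) by (apply Rmult_le_compat_r; lra).
  unfold w; nra.
Qed.

Lemma RInt_gap_s n : RInt gap A0 (s n) <= w (S n) + w n - w 1 - w 0 + 3 * C * eta * L n.
Proof.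
  induction n as [|n IH].
  - simpl; rewrite RInt_point; unfold zero; simpl; lra.
  - destruct (s_ge n).
    rewrite <- (RInt_Chasles gap A0 (s n) (s (S n))) by (apply ex_RInt_gap; lra).
    pose proof (RInt_gap_block n); simpl L; change (plus ?u ?v) with (u + v); lra.
Qed.

Lemma INR_le_L k : INR k <= L k.
Proof.
  induction k as [|k IH]; [simpl; lra|].
  rewrite S_INR; simpl L; pose proof (l_ge1 k); lra.
Qed.

Lemma l_le_L N j : (1 <= N)%nat -> l (N + j) <= L N * (/ INR N + INR (S j) * eta).
Proof.
  intros HN.
  assert (Hn : 1 <= INR N) by (apply (le_INR 1); exact HN).
  assert (Hl : forall k, l 0 <= l k <= l 0 + INR k * eta).
  { induction k as [|k IH]; [simpl; lra|]; rewrite S_INR; destruct (l_step k); lra. }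
  assert (HL0 : forall k, INR k * l 0 <= L k).
  { induction k as [|k IH]; [simpl; lra|]; rewrite S_INR; simpl L; destruct (Hl k); lra. }
  destruct (Hl (N + j)%nat) as [_ Hlj]; pose proof (HL0 N); pose proof (INR_le_L N).
  rewrite plus_INR in Hlj; pose proof (pos_INR j).
  assert (l 0 <= L N * / INR N).
  { apply Rmult_le_reg_r with (INR N); [lra|].
    rewrite Rmult_assoc, Rinv_l; lra. }
  assert ((INR N + INR j) * eta <= L N * INR (S j) * eta).
  { rewrite S_INR; apply Rmult_le_compat_r; nra. }
  lra.
Qed.

Lemma RInt_gap_bracket N T : (1 <= N)%nat -> s N <= T <= s (S N) ->
  RInt gap A0 T <= C * L N * (5 / INR N + 11 * eta).
Proof.
  intros HN HT; destruct (s_ge N) as [HsN _].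
  assert (Htail : 0 <= RInt gap T (s (S N))).
  { apply RInt_ge_0; [lra | apply ex_RInt_gap; lra | intros t Ht; apply gap_nonneg; lra]. }
  pose proof (RInt_gap_s (S N)) as Hs; simpl L in Hs.
  rewrite <- (RInt_Chasles gap A0 T (s (S N))) in Hs by (apply ex_RInt_gap; lra).
  change (plus ?u ?v) with (u + v) in Hs.
  destruct (w_bounds 0) as [Hw0 _], (w_bounds 1) as [Hw1 _].
  destruct (w_bounds (S N)) as [_ Hw2], (w_bounds (S (S N))) as [_ Hw3].
  pose proof (l_le_L N 0 HN) as Hl0; rewrite Nat.add_0_r in Hl0.
  pose proof (l_le_L N 1 HN) as Hl1; rewrite Nat.add_1_r in Hl1.
  pose proof (l_le_L N 2 HN) as Hl2; replace (N + 2)%nat with (S (S N)) in Hl2 by lia.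
  simpl INR in Hl0, Hl1, Hl2.
  assert (Hn : 1 <= INR N) by (apply (le_INR 1); exact HN).
  set (a := / INR N) in *; set (A := L N) in *.
  assert (Ha : 0 < a <= 1).
  { split; [apply Rinv_0_lt_compat; lra|]; rewrite <- Rinv_1; apply Rinv_le_contravar; lra. }
  assert (HA : 0 <= A) by (pose proof (l_ge1 N); nra).
  assert (Hsum : l (S (S N)) + l (S N) + 3 * eta * l N
                 <= A * (2 * a + 5 * eta) + 3 * eta * A * (a + eta)).
  { assert (eta * l N <= eta * (A * (a + 1 * eta))) by (apply Rmult_le_compat_l; lra).
    lra. }
  assert (Hfin : A * (2 * a + 5 * eta) + 3 * eta * A * (a + eta) + 3 * eta * A
                 <= A * (5 * a + 11 * eta)).
  { assert (0 <= A * ((1 - eta) * (a + eta))) by (apply Rmult_le_pos; [|apply Rmult_le_pos]; lra).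
    lra. }
  assert (C * (l (S (S N)) + l (S N) + 3 * eta * l N + 3 * eta * A)
          <= C * (A * (5 * a + 11 * eta))) by (apply Rmult_le_compat_l; lra).
  unfold Rdiv; fold a; lra.
Qed.

Lemma RInt_gap_le_ln n T : (1 <= n)%nat -> s n <= T ->
  A0 <= T /\ 0 <= RInt gap A0 T <= C * (5 / INR n + 11 * eta) * ln T.
Proof.
  intros Hn HT; destruct (s_ge n).
  destruct (INR_unbounded T) as [m Hm].
  destruct (nat_bracket s T m) as [N [_ [HN1 HN2]]]; [simpl; lra | pose proof (INR_le_s m); lra|].
  assert (HnN : (n <= N)%nat).
  { destruct (Nat.le_gt_cases n N) as [|Hlt]; [assumption|].
    pose proof (s_le (S N) n Hlt); lra. }
  split; [lra|]; split.
  { apply RInt_ge_0; [lra | apply ex_RInt_gap; lra | intros t Ht; apply gap_nonneg; lra]. }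
  assert (HLN : L N <= ln T).
  { pose proof (ln_s N); pose proof (s_pos N).
    assert (0 <= ln A0) by (rewrite <- ln_1; apply ln_le; lra).
    assert (ln (s N) <= ln T) by (apply ln_le; lra); lra. }
  assert (Hn1 : 1 <= INR n) by (apply (le_INR 1); exact Hn).
  assert (H5 : 5 / INR N <= 5 / INR n).
  { apply Rmult_le_compat_l; [lra|]; apply Rinv_le_contravar; [lra | apply le_INR; exact HnN]. }
  assert (0 <= L N) by (pose proof (INR_le_L N); pose proof (pos_INR N); lra).
  assert (0 <= 5 / INR N) by (apply Rdiv_le_0_compat; [lra | apply lt_0_INR; lia]).
  eapply Rle_trans; [apply (RInt_gap_bracket N T); [lia | lra]|].
  rewrite !Rmult_assoc; apply Rmult_le_compat_l; [lra|].
  rewrite (Rmult_comm _ (ln T)); apply Rmult_le_compat; lra.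
Qed.

End Blocks.

Hypothesis psi_to_infty : is_lim psi p_infty p_infty.
Hypothesis psi_slow : is_lim (fun t => psi (t * psi t) / psi t) p_infty 1.

Lemma RInt_gap_small e : 0 < e -> exists A0 M, 1 <= A0 /\
  forall T, M <= T -> A0 <= T /\ Rabs (RInt gap A0 T) <= e * ln T.
Proof.
  intros He.
  set (eta := Rmin 1 (e / (22 * C))).
  assert (Heta : 0 < eta <= 1).
  { split; [apply Rmin_glb_lt; [lra | apply Rdiv_lt_0_compat; lra] | apply Rmin_l]. }
  assert (H11 : 11 * C * eta <= e / 2).
  { assert (eta <= e / (22 * C)) by apply Rmin_r.
    apply Rmult_le_compat_l with (r := 22 * C) in H; [|lra].
    replace (22 * C * (e / (22 * C))) with e in H by (field; lra); lra. }
  destruct (slow_beyond_eventually psi c eta psi_increasing psi_positive psi_to_infty psi_slow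
              c_pos Heta) as [A0 [HA0 Hslow]].
  destruct (INR_unbounded (10 * C / e)) as [n0 Hn0].
  exists A0, (s A0 (S n0)); split; [exact HA0|]; intros T HT.
  destruct (RInt_gap_le_ln A0 eta HA0 Heta Hslow (S n0) T ltac:(lia) HT) as [HAT [H0 H1]].
  assert (H5 : 5 * C / INR (S n0) <= e / 2).
  { rewrite S_INR; pose proof (pos_INR n0).
    apply Rmult_le_reg_r with (INR n0 + 1); [lra|].
    unfold Rdiv at 1; rewrite Rmult_assoc, Rinv_l by lra.
    apply Rmult_lt_compat_r with (r := e) in Hn0; [|lra].
    replace (10 * C / e * e) with (10 * C) in Hn0 by (field; lra); nra. }
  assert (0 <= ln T) by (rewrite <- ln_1; apply ln_le; lra).
  split; [exact HAT|]; rewrite Rabs_right by lra.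
  eapply Rle_trans; [exact H1|]; apply Rmult_le_compat_r; [lra|].
  unfold Rdiv in *; lra.
Qed.

End Gap.

Theorem lemma2p4 (psi : R -> R) :
  in_Psi psi ->
  is_lim (fun t => psi (t * psi t) / psi t) p_infty 1 ->
  forall (x : R -> R), pos_decr_rearranged x -> in_M_psi psi x ->
  forall c : R, 0 < c ->
  is_lim (fun T =>
      / ln T * RInt (fun t => / (t * psi t) * RInt x 0 (c * t * psi t)) 1 T
    - / ln T * RInt (fun t => / (t * psi t) * RInt x 0 t) 1 T)
    p_infty 0.
Proof.
  intros [Hconc [Hinc [Hlim [HO _]]]] Hslow x [Hxpos [Hxdec _]] [[B HB] [C HC]] c Hc.
  pose proof (psi_pos psi Hinc HO) as Hpos.
  assert (HC1 : forall t, 0 < t -> F x t <= (Rabs C + 1) * psi t).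
  { intros t Ht; pose proof (HC t Ht); pose proof (Hpos t Ht); pose proof (Rle_abs C); unfold F; nra. }
  pose proof (Rabs_pos C).
  apply is_lim_ext_loc with (fun T => / ln T * RInt (gap psi x c) 1 T).
  { exists 1; intros T HT.
    rewrite (RInt_gap psi x c B Hconc Hinc Hpos Hxdec HB Hc) by lra.
    unfold weight, F; ring. }
  apply is_lim_RInt_div_ln.
  - intros p q Hp Hpq; apply (ex_RInt_gap psi x c B); auto; lra.
  - apply (RInt_gap_small psi x c B (Rabs C + 1)); auto; lra.
Qed.
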